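(* There is no semi-equivelar map of type $(3^2,4,3,6)$ (triangle, triangle, quadrilateral, triangle, hexagon around each vertex, in this cyclic order) on the closed surface of Euler characteristic $-1$. *)

From HB Require Import structures.
From mathcomp Require Import all_boot all_order all_algebra.
Set Implicit Arguments. Unset Strict Implicit. Unset Printing Implicit Defensive.

Section Maps.
Variable V : finType.
(* A map is given by its finite vertex type V and its list of faces F;
   each face is a cyclic sequence of distinct vertices (its boundary cycle). *)
Variable F : seq (seq V).

Definition face (i : nat) : seq V := nth [::] F i.

Definition face_edge (f : seq V) (x y : V) : bool :=
  [&& x \in f, y \in f & (next f x == y) || (next f y == x)].

Definition map_adj (x y : V) : bool := has (fun f => face_edge f x y) F.

Definition map_edges : {set {set V}} :=
  [set [set p.1; p.2] | p : V * V & map_adj p.1 p.2].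

Definition share_edge_at (v : V) (f g : seq V) : bool :=
  has (fun u => face_edge f v u && face_edge g v u) f.

Definition faces_meet_properly (f g : seq V) : Prop :=
  let I := [seq x <- f | x \in g] in
  size I <= 1 \/
  (size I = 2 /\ forall x y, x \in I -> y \in I -> x != y ->
                   face_edge f x y /\ face_edge g x y).

Definition face_cycle_of_type (v : V) (typ : seq nat) : Prop :=
  exists s : seq nat,
    [/\ uniq s /\ size s = size typ,
        (forall i, i \in s -> i < size F /\ v \in face i),
        (forall i, i < size F -> v \in face i -> i \in s),
        (forall k, k < size s ->
           share_edge_at v (face (nth 0 s k)) (face (nth 0 s (k.+1 %% size s)))) &
        exists r, [seq size (face i) | i <- s] = rot r typ \/
                  [seq size (face i) | i <- s] = rot r (rev typ)].

Definition semi_equivelar_map (typ : seq nat) : Prop :=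
  [/\ (forall f, f \in F -> uniq f /\ 3 <= size f),
      (forall i j, i < size F -> j < size F -> i != j ->
         faces_meet_properly (face i) (face j)),
      (forall x y, map_adj x y -> count (fun f => face_edge f x y) F = 2),
      (forall x y : V, connect map_adj x y) &
      (forall v : V, face_cycle_of_type v typ)].

Definition euler_char : int := (#|V|%:Z - #|map_edges|%:Z + (size F)%:Z)%R.
End Maps.

From HB Require Import structures.
From mathcomp Require Import all_boot all_order all_algebra.
From mathcomp Require Import fingroup perm zify.
Set Implicit Arguments. Unset Strict Implicit. Unset Printing Implicit Defensive.

(* At every vertex v we fix a chart: the faces around v listed in the cyclic
   order hexagon, triangle, triangle, quadrilateral, triangle (possible after a
   rotation or reflection of the face-cycle), and we call nbr v k the
   neighbour of v on the edge shared by its k-th and (k+1)-st faces.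
   Weighting each edge by the total size of its two faces (9, 6, 7, 7, 9 around
   v) and comparing the weights seen from the corners of the triangle
   {v, nbr v 0, nbr v 1} links the charts of neighbouring vertices.  As a
   consequence v |-> nbr v 0 is a permutation walking around the hexagons,
   v |-> nbr v 1 an involution, and their product v |-> nbr v 2 walks around
   the quadrilaterals; so these permutations have only 6-, 2- and 4-cycles.
   Counting edges (degree 5) and faces (each vertex gets 12/6 + 3*(12/3) + 12/4
   = 17 of the charge 12 of each face) gives chi = -|V|/12, so |V| = 12, and
   then the parities of the three permutations are incompatible. *)

Section FaceBoundary.
Variable T : finType.
Implicit Types (f : seq T) (x y a b : T).

Lemma next_fixed f x : uniq f -> x \in f -> next f x = x -> size f <= 1.
Proof.
move=> Uf xf; case: (rot_to xf) => i q Dq.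
rewrite -(next_rot i Uf) Dq -(size_rot i) Dq.
have : uniq (x :: q) by rewrite -Dq rot_uniq.
case: q {Dq} => [|a q] //= /andP[]; rewrite inE negb_or => /andP[xa _] _.
by rewrite eqxx => ax; rewrite ax eqxx in xa.
Qed.

Lemma next_neq_prev f x : uniq f -> 2 < size f -> x \in f -> next f x != prev f x.
Proof.
move=> Uf sf xf; apply/eqP => Enp.
case: (rot_to xf) => i q Dq.
have : next f (next f x) = x by rewrite Enp next_prev.
rewrite -!(next_rot i Uf) Dq.
have : size (x :: q) > 2 by rewrite -Dq size_rot.
have : uniq (x :: q) by rewrite -Dq rot_uniq.
case: q {Dq} => [|a [|b q]] //= /andP[]; rewrite !inE !negb_or.
case/and3P=> xa xb _ /and3P[/andP[ab _] _ _] _.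
rewrite eqxx /= (eq_sym a x) (negbTE xa) eqxx => bx.
by rewrite bx eqxx in xb.
Qed.

Lemma face_edgeE f x y : uniq f ->
  face_edge f x y = (x \in f) && ((y == next f x) || (y == prev f x)).
Proof.
move=> Uf; rewrite /face_edge; case xf: (x \in f) => //=.
case yf: (y \in f) => /=.
  congr (_ || _); first by rewrite eq_sym.
  by apply/eqP/eqP => [<-|->]; [rewrite prev_next | rewrite next_prev].
by apply/esym/negbTE/orP => -[] /eqP Ey; rewrite Ey ?mem_next ?mem_prev xf in yf.
Qed.

Lemma face_edge_sym f x y : face_edge f x y = face_edge f y x.
Proof. by rewrite /face_edge andbCA orbC. Qed.

Lemma face_edge_mem f x y : face_edge f x y -> (x \in f) && (y \in f).
Proof. by case/and3P=> -> ->. Qed.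

Lemma next_neq f x : uniq f -> 1 < size f -> x \in f -> next f x != x.
Proof. by move=> Uf sf xf; apply/eqP => /(next_fixed Uf xf); rewrite leqNgt sf. Qed.

Lemma prev_neq f x : uniq f -> 1 < size f -> x \in f -> prev f x != x.
Proof.
move=> Uf sf xf; apply/eqP => Epx.
by have := next_prev Uf x; rewrite Epx => /eqP; rewrite (negbTE (next_neq Uf sf xf)).
Qed.

Lemma face_edge_irr f x : uniq f -> 1 < size f -> face_edge f x x = false.
Proof.
move=> Uf sf; rewrite face_edgeE //; case xf: (x \in f) => //=.
by rewrite !(eq_sym x) (negbTE (next_neq Uf sf xf)) (negbTE (prev_neq Uf sf xf)).
Qed.

Lemma face_edge_orient f x a b : uniq f -> a != b ->
  face_edge f x a -> face_edge f x b ->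
  (a = next f x /\ b = prev f x) \/ (a = prev f x /\ b = next f x).
Proof.
move=> Uf ab; rewrite !face_edgeE // => /andP[_ /orP[] /eqP Ea] /andP[_ /orP[] /eqP Eb].
all: by [left | right | rewrite Ea Eb eqxx in ab].
Qed.

Lemma face_edge_two f x a b y : uniq f -> a != b ->
  face_edge f x a -> face_edge f x b -> face_edge f x y -> y = a \/ y = b.
Proof.
move=> Uf ab xa xb; rewrite face_edgeE // => /andP[_ /orP[] /eqP->].
all: by case: (face_edge_orient Uf ab xa xb) => -[-> ->]; auto.
Qed.

Lemma triangle_edge f x y : uniq f -> size f = 3 -> x \in f -> y \in f -> x != y ->
  face_edge f x y.
Proof.
move=> Uf sf xf yf xy; rewrite face_edgeE // xf /=.
have sf1 : 1 < size f by rewrite sf.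
have sf2 : 2 < size f by rewrite sf.
have U3 : uniq [:: x; next f x; prev f x].
  rewrite /= !inE negb_or next_neq_prev // !(eq_sym x).
  by rewrite next_neq ?prev_neq.
have sub3 : {subset [:: x; next f x; prev f x] <= f}.
  by move=> z; rewrite !inE => /or3P[] /eqP->; rewrite ?mem_next ?mem_prev.
have [_ E3] := uniq_min_size U3 sub3 (eq_leq sf).
by move: yf; rewrite -E3 !inE (eq_sym y) (negbTE xy).
Qed.
End FaceBoundary.

Section PermutationOrbits.
Local Open Scope group_scope.
Variable T : finType.
Implicit Types (s : {perm T}) (c : seq T).

Lemma porbit_next s c x : uniq c -> {in c, s =1 next c} -> x \in c ->
  #|porbit s x| = size c.
Proof.
move=> Uc Es xc.
have It i : iter i s x = iter i (next c) x /\ iter i (next c) x \in c.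
  elim: i => [|i [IH1 IH2]] //=.
  by rewrite IH1 Es // mem_next.
rewrite -(card_uniqP Uc); apply: eq_card => y.
apply/porbitP/idP => [[i ->]|yc]; first by rewrite permX; case: (It i) => ->.
have : fconnect (next c) x y by rewrite (fconnect_cycle (cycle_next Uc) xc).
move/iter_findex => <-; exists (findex (next c) x y).
by rewrite permX; case: (It (findex (next c) x y)).
Qed.

Lemma porbit_involution s x : s x != x -> s (s x) = x -> #|porbit s x| = 2.
Proof.
move=> sx ssx; have Uc : uniq [:: x; s x] by rewrite /= inE eq_sym sx.
apply: (porbit_next Uc); last by rewrite inE eqxx.
move=> w; rewrite !inE => /orP[] /eqP-> /=; first by rewrite eqxx.
by rewrite (negbTE sx) eqxx.
Qed.

Definition turns_along s c :=
  {in c, forall w, (s w = next c w /\ s^-1 w = prev c w) \/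
                   (s w = prev c w /\ s^-1 w = next c w)}.

(* If s turns along c and steps forward at one vertex, it steps forward
   everywhere: otherwise some vertex would have equal successor and predecessor. *)
Lemma turns_along_next s c x : uniq c -> 2 < size c -> x \in c ->
  turns_along s c -> s x = next c x -> {in c, s =1 next c}.
Proof.
move=> Uc sc xc turn sx w wc.
have : fconnect (next c) x w by rewrite (fconnect_cycle (cycle_next Uc) xc).
move/iter_findex => <-; elim: (findex _ x w) => [|n IH] //=.
set u := iter n (next c) x in IH *.
have uc : u \in c by rewrite /u; elim: (n) => //= m IHm; rewrite mem_next.
have u'c : next c u \in c by rewrite mem_next.
case: (turn _ u'c) => [[] //|[_ Einv]].
have Eu : s^-1 (next c u) = u by rewrite -IH permK.
have : next c (next c u) = prev c (next c u) by rewrite -Einv Eu prev_next.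
by move/eqP; rewrite (negbTE (next_neq_prev Uc sc u'c)).
Qed.

Lemma turns_along_rev s c : uniq c -> turns_along s c -> turns_along s (rev c).
Proof.
move=> Uc turn w; rewrite mem_rev => /turn.
by rewrite next_rev ?prev_rev //; case=> -[-> ->]; [right | left].
Qed.

Lemma porbit_face s c x : uniq c -> 2 < size c -> x \in c ->
  {in c, forall w, [/\ face_edge c w (s w), face_edge c w (s^-1 w) & s w != s^-1 w]} ->
  #|porbit s x| = size c.
Proof.
move=> Uc sc xc steps.
have turn : turns_along s c.
  by move=> w /steps[ea eb ab]; apply: face_edge_orient Uc ab ea eb.
case: (turn x xc) => -[sx _].
  exact: porbit_next Uc (turns_along_next Uc sc xc turn sx) xc.
have Urc : uniq (rev c) by rewrite rev_uniq.
have xrc : x \in rev c by rewrite mem_rev.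
rewrite -size_rev; apply: (porbit_next Urc _ xrc).
apply: (turns_along_next Urc _ xrc (turns_along_rev Uc turn)).
  by rewrite size_rev.
by rewrite next_rev.
Qed.

Lemma card_porbits_uniform s k : (forall x, #|porbit s x| = k) ->
  #|T| = (#|porbits s| * k)%N.
Proof.
move=> Hk; rewrite -[in LHS]sum1_card (partition_big_imset (porbit s)) /=.
rewrite -sum_nat_const; apply: eq_bigr => X /imsetP[y _ ->].
rewrite -(Hk y) -sum1_card; apply: eq_bigl => x.
by rewrite eq_porbit_mem.
Qed.

Lemma odd_perm_uniform s k : 0 < k -> (forall x, #|porbit s x| = k) ->
  odd_perm s = odd #|T| (+) odd (#|T| %/ k).
Proof. by move=> k0 Hk; rewrite /odd_perm (card_porbits_uniform Hk) mulnK. Qed.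
End PermutationOrbits.

Lemma cycle_nth (T : Type) (adj : rel T) (x0 : T) (s : seq T) :
  (forall k, k < size s -> adj (nth x0 s k) (nth x0 s (k.+1 %% size s))) -> path.cycle adj s.
Proof.
case: s => [|x p] //= He; apply/(pathP x) => i; rewrite size_rcons => hi.
have := He i hi; rewrite -cats1 -cat_cons !nth_cat hi (set_nth_default (s := x :: p) x0 x hi).
case: (ltngtP i (size p)) => [lt_ip|gt_ip|->].
- by rewrite modn_small ?ltnS // (set_nth_default x0).
- by rewrite ltnS leqNgt gt_ip in hi.
- by rewrite modnn subnn.
Qed.

Definition vertex_type := [:: 3; 3; 4; 3; 6].
Definition chart_type := [:: 6; 3; 3; 4; 3].

Lemma type_normal_form t :
  (exists r, t = rot r vertex_type \/ t = rot r (rev vertex_type)) ->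
  exists k, rot k t = chart_type \/ rot k (rev t) = chart_type.
Proof.
case=> r; case: (ltnP r 5) => [r_lt|r_ge]; last first.
  by rewrite !rot_oversize // => -[] ->; exists 4; [left | right].
by case: r r_lt => [|[|[|[|[|]]]]] // _ [] ->;
   first [by exists 0; auto | by exists 1; auto | by exists 2; auto
         | by exists 3; auto | by exists 4; auto].
Qed.

Lemma card_darts (T : finType) (r : rel T) : symmetric r -> irreflexive r ->
  #|[set p : T * T | r p.1 p.2]| =
  2 * #|[set [set p.1; p.2] | p : T * T & r p.1 p.2]|.
Proof.
move=> r_sym r_irr.
rewrite -sum1_card (partition_big_imset (fun p : T * T => [set p.1; p.2])) /=.
rewrite mulnC -sum_nat_const; apply: eq_bigr => _ /imsetP[[x y] + ->] /=.
rewrite inE /= => rxy.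
have xy : x != y by apply: contraTneq rxy => ->; rewrite r_irr.
rewrite (eq_bigl (mem [set (x, y); (y, x)])) ?sum1_card ?cards2.
  by rewrite xpair_eqE negb_and xy.
move=> [a b]; rewrite !inE /=; apply/andP/orP => [[rab /eqP Eab]|].
  have : a \in [set x; y] by rewrite -Eab set21.
  have : b \in [set x; y] by rewrite -Eab set22.
  rewrite !inE => /orP[] /eqP Eb /orP[] /eqP Ea; subst a b; rewrite ?r_irr // in rab.
    by right.
  by left.
by case=> /eqP[-> ->]; split; rewrite ?(r_sym y) // setUC.
Qed.

Lemma count_at_indices (T : Type) (P : pred T) (x0 : T) (s : seq T) (idx : seq nat) :
  uniq idx -> {in idx, forall i, i < size s /\ P (nth x0 s i)} -> size idx <= count P s.
Proof.
move=> U Hi; rewrite -[s in count _ s](mkseq_nth x0) /mkseq count_map -size_filter.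
apply: (uniq_leq_size U) => i /Hi [hi Pi].
by rewrite mem_filter mem_iota add0n /= Pi hi.
Qed.

Definition succ5 k := if k == 4 then 0 else k.+1.
Definition pred5 k := if k == 0 then 4 else k.-1.

Lemma succ5_lt k : k < 5 -> succ5 k < 5. Proof. by case: k => [|[|[|[|[|]]]]]. Qed.
Lemma pred5_lt k : k < 5 -> pred5 k < 5. Proof. by case: k => [|[|[|[|[|]]]]]. Qed.
Lemma succ5K k : k < 5 -> succ5 (pred5 k) = k. Proof. by case: k => [|[|[|[|[|]]]]]. Qed.
Lemma pred5_neq k : k < 5 -> pred5 k != k. Proof. by case: k => [|[|[|[|[|]]]]]. Qed.
Lemma succ5_neq k : k < 5 -> succ5 k != k. Proof. by case: k => [|[|[|[|[|]]]]]. Qed.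

(* A map of type (3^2,4,3,6): only three of the axioms of semi-equivelar maps
   enter the argument: faces are simple cycles of length at least 3, every
   edge lies on exactly two faces, and every vertex has the given type. *)
Section Map.
Variables (V : finType) (F : seq (seq V)).
Hypothesis faces_simple : forall f, f \in F -> uniq f /\ 3 <= size f.
Hypothesis edge_in_two_faces :
  forall x y, map_adj F x y -> count (fun f => face_edge f x y) F = 2.
Hypothesis vertex_of_type : forall v, face_cycle_of_type F v vertex_type.

Lemma face_uniq i : i < size F -> uniq (face F i).
Proof. by move=> hi; have [] := faces_simple (mem_nth [::] hi). Qed.

Lemma face_size i : i < size F -> 2 < size (face F i).
Proof. by move=> hi; have [] := faces_simple (mem_nth [::] hi). Qed.

Definition faces_at v := [seq i <- iota 0 (size F) | v \in face F i].

Definition adjacent_at v : rel nat :=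
  fun i j => share_edge_at v (face F i) (face F j).

Lemma adjacent_at_sym v : symmetric (adjacent_at v).
Proof.
move=> i j; apply/hasP/hasP => -[u _ /andP[ei ej]].
all: by exists u; [case/andP: (face_edge_mem ej) | rewrite ei ej].
Qed.

Definition chart v (s : seq nat) : bool :=
  [&& perm_eq s (faces_at v), [seq size (face F i) | i <- s] == chart_type
    & path.cycle (adjacent_at v) s].

Lemma chart_exists v : exists s, chart v s.
Proof.
have [s [[Us _] s_at at_s s_adj s_type]] := vertex_of_type v.
have Ps : perm_eq s (faces_at v).
  apply: uniq_perm => //; first by rewrite filter_uniq // iota_uniq.
  move=> i; rewrite mem_filter mem_iota add0n /=.
  by apply/idP/andP => [/s_at[]|[vi hi]]; [ | apply: at_s].
have Cs := @cycle_nth _ (adjacent_at v) 0 s s_adj.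
have [k [Ek|Ek]] := type_normal_form s_type.
  exists (rot k s); rewrite /chart perm_rot Ps map_rot Ek eqxx.
  by rewrite rot_cycle.
exists (rot k (rev s)); rewrite /chart perm_rot perm_rev Ps map_rot map_rev Ek eqxx.
rewrite rot_cycle rev_cycle (eq_cycle (e' := adjacent_at v)) //.
by move=> i j; rewrite adjacent_at_sym.
Qed.

Definition chart_of v : seq nat := xchoose (chart_exists v).

Definition cface v k : nat := nth 0 (chart_of v) k.

Lemma chart_ofP v : chart v (chart_of v).
Proof. exact: xchooseP (chart_exists v). Qed.

Lemma size_chart_of v : size (chart_of v) = 5.
Proof.
by case/and3P: (chart_ofP v) => _ /eqP/(congr1 size); rewrite size_map.
Qed.

Lemma mem_chart_of v i : (i \in chart_of v) = (i < size F) && (v \in face F i).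
Proof.
case/and3P: (chart_ofP v) => /perm_mem-> _ _.
by rewrite mem_filter mem_iota andbC.
Qed.

Lemma cface_chart v k : k < 5 -> cface v k \in chart_of v.
Proof. by move=> hk; rewrite mem_nth ?size_chart_of. Qed.

Lemma cface_lt v k : k < 5 -> cface v k < size F.
Proof. by move/(cface_chart v); rewrite mem_chart_of => /andP[]. Qed.

Lemma cface_mem v k : k < 5 -> v \in face F (cface v k).
Proof. by move/(cface_chart v); rewrite mem_chart_of => /andP[]. Qed.

Lemma cface_size v k : k < 5 -> size (face F (cface v k)) = nth 0 chart_type k.
Proof.
move=> hk; case/and3P: (chart_ofP v) => _ /eqP Esz _.
by rewrite -Esz (nth_map 0) ?size_chart_of.
Qed.

Lemma cface_inj v j k : j < 5 -> k < 5 -> cface v j = cface v k -> j = k.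
Proof.
move=> hj hk; have Uc : uniq (chart_of v).
  by case/and3P: (chart_ofP v) => /perm_uniq->; rewrite filter_uniq ?iota_uniq.
by move/eqP; rewrite nth_uniq ?size_chart_of // => /eqP.
Qed.

Lemma cface_onto v i : i < size F -> v \in face F i -> exists2 k, k < 5 & i = cface v k.
Proof.
move=> hi vi; have ic : i \in chart_of v by rewrite mem_chart_of hi.
exists (index i (chart_of v)); last by rewrite /cface nth_index.
by rewrite -(size_chart_of v) index_mem.
Qed.

Lemma cface_adjacent v k : k < 5 -> adjacent_at v (cface v k) (cface v (succ5 k)).
Proof.
case/and3P: (chart_ofP v) => _ _; rewrite /cface.
case: (chart_of v) (size_chart_of v) => [|i0 [|i1 [|i2 [|i3 [|i4 [|]]]]]] //= _.
by rewrite andbT => /and5P[? ? ? ? ?]; case: k => [|[|[|[|[|]]]]].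
Qed.

Definition nbr v k : V :=
  let f := face F (cface v k) in let g := face F (cface v (succ5 k)) in
  nth v f (find (fun u => face_edge f v u && face_edge g v u) f).

Lemma nbr_edge v k : k < 5 ->
  face_edge (face F (cface v k)) v (nbr v k) /\
  face_edge (face F (cface v (succ5 k))) v (nbr v k).
Proof. by move/(cface_adjacent v)/(nth_find v)/andP. Qed.

(* As an edge lies on exactly two faces of the map, at most two faces of a
   chart contain it. *)
Lemma chart_edge_faces v u (ks : seq nat) : uniq ks ->
  {in ks, forall k, k < 5 /\ face_edge (face F (cface v k)) v u} -> size ks <= 2.
Proof.
case: ks => [//|k0 ks] U Hks.
have [hk0 e0] := Hks k0 (mem_head _ _).
have vu : map_adj F v u.
  by apply/hasP; exists (face F (cface v k0)); rewrite ?mem_nth ?cface_lt.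
rewrite -(edge_in_two_faces vu) -(size_map (cface v)).
apply: (count_at_indices (x0 := [::])).
  by rewrite map_inj_in_uniq // => j k /Hks[hj _] /Hks[hk _]; apply: cface_inj.
by move=> _ /mapP[k /Hks[hk ek] ->]; rewrite cface_lt.
Qed.

(* The five chart neighbours of v are distinct: otherwise an edge would lie
   on three faces. *)
Lemma nbr_inj v j k : j < 5 -> k < 5 -> nbr v j = nbr v k -> j = k.
Proof.
move=> hj hk Ejk; apply/eqP; apply: contraT => jk.
have ks_big : 2 < size (undup [:: j; succ5 j; k; succ5 k]).
  by clear Ejk; move: jk hj hk; case: j => [|[|[|[|[|]]]]]; case: k => [|[|[|[|[|]]]]].
have ks_edges : {in undup [:: j; succ5 j; k; succ5 k],
    forall i, i < 5 /\ face_edge (face F (cface v i)) v (nbr v k)}.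
  have [ej ej'] := nbr_edge v hj; have [ek ek'] := nbr_edge v hk; rewrite Ejk in ej ej'.
  by move=> i; rewrite mem_undup !inE => /or4P[] /eqP->; rewrite ?succ5_lt.
by have := chart_edge_faces (undup_uniq _) ks_edges; rewrite leqNgt ks_big.
Qed.

Lemma chart_face_edges v k : k < 5 ->
  [/\ face_edge (face F (cface v k)) v (nbr v k),
      face_edge (face F (cface v k)) v (nbr v (pred5 k)) &
      nbr v k != nbr v (pred5 k)].
Proof.
move=> hk; have [e1 _] := nbr_edge v hk; have [_ e2] := nbr_edge v (pred5_lt hk).
rewrite succ5K // in e2; split => //.
by apply: contraNneq (pred5_neq hk) => /(nbr_inj hk (pred5_lt hk)) Ek; rewrite -Ek.
Qed.

Lemma nbr_neq v k : k < 5 -> nbr v k != v.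
Proof.
move=> hk; have [e _] := nbr_edge v hk; apply/eqP => Ev.
have hf := cface_lt v hk.
by rewrite Ev face_edge_irr ?face_uniq ?(ltnW (face_size hf)) in e.
Qed.

Lemma face_edge_at v i y : i < size F -> face_edge (face F i) v y ->
  exists2 k, k < 5 & i = cface v k /\ (y = nbr v k \/ y = nbr v (pred5 k)).
Proof.
move=> hi e; have /andP[vi _] := face_edge_mem e.
have [k hk Ei] := cface_onto hi vi; exists k => //; split => //.
have [e1 e2 n12] := chart_face_edges v hk; rewrite -Ei in e1 e2.
exact: face_edge_two (face_uniq hi) n12 e1 e2 e.
Qed.

Definition edge_weight x y : nat :=
  \sum_(i < size F | face_edge (face F i) x y) size (face F i).

Lemma edge_weight_sym x y : edge_weight x y = edge_weight y x.
Proof. by apply: eq_bigl => i; rewrite face_edge_sym. Qed.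

Lemma edge_weight_nbr v k : k < 5 ->
  edge_weight v (nbr v k) = nth 0 chart_type k + nth 0 chart_type (succ5 k).
Proof.
move=> hk; have [e1 e2] := nbr_edge v hk; have hk' := succ5_lt hk.
pose o1 := Ordinal (cface_lt v hk); pose o2 := Ordinal (cface_lt v hk').
have o21 : o2 != o1.
  by apply: contraNneq (succ5_neq hk) => -[/(cface_inj hk' hk)->].
rewrite /edge_weight (bigD1 o1) //= (bigD1 o2) /=; last by rewrite e2 o21.
rewrite big1 ?addn0 ?cface_size // => i /andP[/andP[ei ni1] ni2]; exfalso.
have [m hm [Ei [/(nbr_inj hk hm) Ekm | /(nbr_inj hk (pred5_lt hm)) Ekm]]] :=
  face_edge_at (ltn_ord i) ei.
  by move/eqP: ni1; apply; apply: val_inj; rewrite /= Ei Ekm.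
by move/eqP: ni2; apply; apply: val_inj; rewrite /= Ei Ekm succ5K.
Qed.

Section TriangleCorner.
Variables (t : nat) (w y z : V).
Hypotheses (t_face : t < size F) (t_size : size (face F t) = 3).
Hypotheses (wt : w \in face F t) (yt : y \in face F t) (zt : z \in face F t).
Hypotheses (wy : w != y) (wz : w != z) (yz : y != z).

Lemma triangle_corner : exists2 m, m \in [:: 1; 2; 4] &
  (y = nbr w (pred5 m) /\ z = nbr w m) \/ (y = nbr w m /\ z = nbr w (pred5 m)).
Proof.
have [m hm Et] := cface_onto t_face wt; exists m.
  by move: (cface_size w hm); rewrite -Et t_size; case: m hm {Et} => [|[|[|[|[|]]]]].
have ey := triangle_edge (face_uniq t_face) t_size wt yt wy.
have ez := triangle_edge (face_uniq t_face) t_size wt zt wz.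
have [e1 e2 n12] := chart_face_edges w hm; rewrite -Et in e1 e2.
have [Ey|Ey] := face_edge_two (face_uniq t_face) n12 e1 e2 ey;
have [Ez|Ez] := face_edge_two (face_uniq t_face) n12 e1 e2 ez;
by [right | left | move: yz; rewrite Ey Ez eqxx].
Qed.

(* The two edges of a triangle at a corner have distinct weights among
   6 = 3 + 3, 7 = 3 + 4 and 9 = 3 + 6. *)
Lemma corner_weights : [/\ edge_weight w y \in [:: 6; 7; 9],
  edge_weight w z \in [:: 6; 7; 9] & edge_weight w y != edge_weight w z].
Proof.
have [m hm [[-> ->]|[-> ->]]] := triangle_corner;
by move: hm; rewrite !inE => /or3P[] /eqP->; rewrite !edge_weight_nbr.
Qed.

Lemma corner_by_weights :
  (edge_weight w y = 9 -> edge_weight w z = 7 -> y = nbr w 4 /\ z = nbr w 3) /\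
  (edge_weight w y = 6 -> edge_weight w z = 7 -> y = nbr w 1 /\ z = nbr w 2).
Proof.
have [m hm [[-> ->]|[-> ->]]] := triangle_corner;
by move: hm; rewrite !inE => /or3P[] /eqP->; rewrite !edge_weight_nbr.
Qed.
End TriangleCorner.

Lemma triangle_link v : [/\ nbr (nbr v 0) 4 = v, nbr (nbr v 0) 3 = nbr v 1,
  nbr (nbr v 1) 1 = v & nbr (nbr v 1) 2 = nbr v 0].
Proof.
set w := nbr v 0; set x := nbr v 1.
have ht := @cface_lt v 1 isT; have st := @cface_size v 1 isT.
have vt := @cface_mem v 1 isT.
have wt : w \in face F (cface v 1).
  by have [_ /face_edge_mem/andP[]] := @nbr_edge v 0 isT.
have xt : x \in face F (cface v 1).
  by have [/face_edge_mem/andP[]] := @nbr_edge v 1 isT.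
have wv : w != v := @nbr_neq v 0 isT.
have xv : x != v := @nbr_neq v 1 isT.
have wx : w != x by apply/eqP => /(@nbr_inj v 0 1 isT isT).
have [vw vx xw] : [/\ v != w, v != x & x != w].
  by split; rewrite eq_sym.
have e_wv : edge_weight w v = 9 by rewrite edge_weight_sym edge_weight_nbr.
have e_xv : edge_weight x v = 6 by rewrite edge_weight_sym edge_weight_nbr.
have e_wx : edge_weight w x = 7.
  have [_ Hw Nw] := corner_weights ht st wt vt xt wv wx vx.
  have [_ _ Nx] := corner_weights ht st xt vt wt xv xw vw.
  rewrite e_wv in Nw; rewrite e_xv edge_weight_sym in Nx.
  by move: Hw; rewrite !inE => /or3P[] /eqP E; rewrite E in Nw Nx *.
have [at_w _] := corner_by_weights ht st wt vt xt wv wx vx.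
have [_ at_x] := corner_by_weights ht st xt vt wt xv xw vw.
have [<- <-] := at_w e_wv e_wx.
by rewrite edge_weight_sym in e_wx; have [<- <-] := at_x e_xv e_wx.
Qed.

(* Every vertex lies on exactly one hexagon and one quadrilateral. *)
Lemma cface_by_size v w k : k \in [:: 0; 3] -> w \in face F (cface v k) ->
  cface w k = cface v k.
Proof.
move=> k03 wf; have hk : k < 5 by move: k03; rewrite !inE => /orP[] /eqP->.
have [m hm Em] := cface_onto (cface_lt v hk) wf.
have := cface_size v hk; rewrite Em (cface_size w hm).
by move: k03 hm; rewrite !inE => /orP[] /eqP-> ; case: m {Em} => [|[|[|[|[|]]]]].
Qed.

Lemma porbit_along_chart_face (s : {perm V}) k v : k \in [:: 0; 3] ->
  (forall w, (s w = nbr w k /\ (s^-1)%g w = nbr w (pred5 k)) \/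
             (s w = nbr w (pred5 k) /\ (s^-1)%g w = nbr w k)) ->
  #|porbit s v| = nth 0 chart_type k.
Proof.
move=> k03 steps; have hk : k < 5 by move: k03; rewrite !inE => /orP[] /eqP->.
have hf := cface_lt v hk; rewrite -(cface_size v hk).
apply: porbit_face; rewrite ?face_uniq ?face_size ?cface_mem // => w wf.
have [e1 e2 n12] := chart_face_edges w hk; rewrite (cface_by_size k03 wf) in e1 e2.
by case: (steps w) => -[-> ->]; split; rewrite // eq_sym.
Qed.

(* By triangle_link, v |-> nbr v 0 and v |-> nbr v 1 have left inverses. *)
Lemma hex_step_inj : injective (fun v => nbr v 0).
Proof. by apply: (can_inj (g := fun v => nbr v 4)) => v; case: (triangle_link v). Qed.

Lemma swap_inj : injective (fun v => nbr v 1).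
Proof. by apply: (can_inj (g := fun v => nbr v 1)) => v; case: (triangle_link v). Qed.

(* [hex_step] walks around the hexagons, [swap] exchanges the two ends of the
   triangle-triangle edges, and their product walks around the quadrilaterals. *)
Definition hex_step : {perm V} := perm hex_step_inj.
Definition swap : {perm V} := perm swap_inj.
Definition quad_step : {perm V} := (swap * hex_step)%g.

Lemma hex_stepE v : hex_step v = nbr v 0. Proof. by rewrite permE. Qed.
Lemma swapE v : swap v = nbr v 1. Proof. by rewrite permE. Qed.

Lemma hex_stepVE v : (hex_step^-1)%g v = nbr v 4.
Proof.
set u := (hex_step^-1)%g v; rewrite -[v](permKV hex_step) -/u hex_stepE.
by case: (triangle_link u).
Qed.

Lemma quad_stepE v : quad_step v = nbr v 2.
Proof.
rewrite permM swapE hex_stepE.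
case: (triangle_link v) => _ _ Ev _.
by case: (triangle_link (nbr v 1)) => _ _ _; rewrite Ev.
Qed.

Lemma quad_stepVE v : (quad_step^-1)%g v = nbr v 3.
Proof.
suff Ev : quad_step (nbr v 3) = v by rewrite -[in LHS]Ev permK.
set u := (hex_step^-1)%g v; rewrite -[v](permKV hex_step) -/u hex_stepE.
case: (triangle_link u) => _ -> Eu _.
by rewrite permM !swapE Eu hex_stepE.
Qed.

Lemma porbit_hex_step v : #|porbit hex_step v| = 6.
Proof.
by apply: (@porbit_along_chart_face _ 0) => // w; left; rewrite hex_stepE hex_stepVE.
Qed.

Lemma porbit_quad_step v : #|porbit quad_step v| = 4.
Proof.
by apply: (@porbit_along_chart_face _ 3) => // w; right; rewrite quad_stepE quad_stepVE.
Qed.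

Lemma porbit_swap v : #|porbit swap v| = 2.
Proof.
apply: porbit_involution; rewrite !swapE; first exact: (@nbr_neq v 1).
by case: (triangle_link v).
Qed.

Lemma map_adjP v y : reflect (exists2 k, k < 5 & y = nbr v k) (map_adj F v y).
Proof.
apply: (iffP hasP) => [[f fF e]|[k hk ->]].
  have hi : index f F < size F by rewrite index_mem.
  rewrite -(nth_index [::] fF) in e.
  have [k hk [_ [->|->]]] := face_edge_at hi e; first by exists k.
  by exists (pred5 k); rewrite ?pred5_lt.
exists (face F (cface v k)); first by rewrite mem_nth ?cface_lt.
by case: (nbr_edge v hk).
Qed.

Lemma map_adj_sym : symmetric (map_adj F).
Proof. by move=> x y; apply: eq_has => f; rewrite face_edge_sym. Qed.

Lemma map_adj_irr : irreflexive (map_adj F).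
Proof.
move=> x; apply/hasP => -[f /faces_simple[Uf sf]].
by rewrite face_edge_irr // ltnW.
Qed.

Lemma card_nbrs v : #|[set y | map_adj F v y]| = 5.
Proof.
have -> : [set y | map_adj F v y] = [set nbr v k | k : 'I_5].
  apply/setP => y; rewrite inE; apply/map_adjP/imsetP => [[k hk ->]|[k _ ->]].
    by exists (Ordinal hk).
  by exists k.
rewrite card_imset ?card_ord // => i j /(nbr_inj (ltn_ord i) (ltn_ord j)).
exact: val_inj.
Qed.

Lemma card_edges : 2 * #|map_edges F| = 5 * #|V|.
Proof.
rewrite /map_edges -(card_darts map_adj_sym map_adj_irr) -sum1_card.
rewrite (eq_bigl (fun p : V * V => predT p.1 && map_adj F p.1 p.2)) => [|p];
  last by rewrite inE.
rewrite -(pair_big_dep predT (map_adj F) (fun _ _ => 1)) /=.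
rewrite mulnC -sum_nat_const; apply: eq_bigr => x _.
by rewrite -(card_nbrs x) -sum1_card; apply: eq_bigl => y; rewrite inE.
Qed.

(* Each face spreads a charge 12 evenly over its vertices; every vertex then
   receives 12/6 + 12/3 + 12/3 + 12/4 + 12/3 = 17, hence 12|F| = 17|V|. *)
Lemma face_charge i : i < size F -> 12 %/ size (face F i) * size (face F i) = 12.
Proof.
move=> hi; have [w wi] : exists w, w \in face F i.
  by case: (face F i) (face_size hi) => // w ? _; exists w; rewrite mem_head.
have [m hm ->] := cface_onto hi wi; rewrite cface_size //.
by case: m hm {wi} => [|[|[|[|[|]]]]].
Qed.

Lemma vertex_charge w : \sum_(i < size F | w \in face F i) 12 %/ size (face F i) = 17.
Proof.
rewrite -[LHS](big_mkord (fun i => w \in face F i) (fun i => 12 %/ size (face F i))).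
case/and3P: (chart_ofP w) => Pw /eqP Esize _.
rewrite -big_filter /index_iota subn0 -/(faces_at w) -(perm_big _ Pw).
rewrite -[LHS](big_map (fun i => size (face F i)) predT (fun n => 12 %/ n)) Esize.
by rewrite !big_cons big_nil.
Qed.

Lemma card_faces : 12 * size F = 17 * #|V|.
Proof.
transitivity (\sum_(i < size F) \sum_(w | w \in face F i) 12 %/ size (face F i)).
  rewrite mulnC -[size F in LHS]card_ord -sum_nat_const; apply: eq_bigr => i _.
  by rewrite sum_nat_const (card_uniqP (face_uniq (ltn_ord i))) mulnC face_charge.
rewrite (exchange_big_dep predT) //= mulnC -sum_nat_const.
by apply: eq_bigr => w _; apply: vertex_charge.
Qed.

(* By the two counts, the Euler characteristic is |V| - 5|V|/2 + 17|V|/12 = -|V|/12. *)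
Lemma euler_char_minus1_card : euler_char F = (-1)%R -> #|V| = 12.
Proof.
by move=> chi; have := card_edges; have := card_faces; rewrite /euler_char in chi; lia.
Qed.

(* On 12 vertices the permutations with only 6-cycles or 2-cycles are even,
   the one with only 4-cycles is odd: impossible for quad_step = swap * hex_step. *)
Lemma euler_char_neq_minus1 : euler_char F <> (-1)%R.
Proof.
move/euler_char_minus1_card => card12.
have := odd_perm_uniform (isT : 0 < 4) porbit_quad_step.
rewrite /quad_step odd_permM (odd_perm_uniform _ porbit_swap) //.
by rewrite (odd_perm_uniform _ porbit_hex_step) // card12.
Qed.
End Map.

Unset Implicit Arguments.
Set Strict Implicit.

Theorem lemma4p2 (V : finType) (F : seq (seq V)) :
  semi_equivelar_map F [:: 3; 3; 4; 3; 6] -> euler_char F <> (-1)%R.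
Proof. by case=> faces_simple _ two_faces _ vtype; exact: euler_char_neq_minus1. Qed.
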